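(* Let $V$ be a finite set with nonnegative symmetric similarity scores $w_{ij}$ ($i\ne j$) satisfying the triangle inequality $w_{ij}\le w_{ik}+w_{kj}$ for all distinct $i,j,k\in V$. For a rooted binary tree $T$ whose leaves are in bijection with $V$, let $cost_T(V)=\sum_{\{i,j\}\subseteq V}w_{ij}\,|\mathrm{leaves}(T[i\vee j])|$. Then for every such tree $T$, $cost_T(V)\le 2\min_{T'}cost_{T'}(V)$, the minimum being over all such trees $T'$.
   Context: $T[i\vee j]$ denotes the subtree of $T$ rooted at the least common ancestor of the leaves $i$ and $j$, and $|\mathrm{leaves}(T[i\vee j])|$ is its number of leaves. The sum is over unordered pairs of distinct elements. *)

From mathcomp Require Import all_boot all_order all_algebra.
Set Implicit Arguments. Unset Strict Implicit. Unset Printing Implicit Defensive.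
Import Order.TTheory GRing.Theory Num.Theory.

Inductive btree (V : Type) : Type :=
| Leaf of V
| Node of btree V & btree V.
Arguments Leaf {V} _.
Arguments Node {V} _ _.

Fixpoint leaves {V : Type} (t : btree V) : seq V :=
  match t with
  | Leaf v => [:: v]
  | Node l r => leaves l ++ leaves r
  end.

Definition leaf_bij {V : finType} (t : btree V) : bool :=
  uniq (leaves t) && all (fun v => v \in leaves t) (enum V).

(* |leaves(T[i \/ j])| : number of leaves of the subtree rooted at the
   least common ancestor of leaves i and j. *)
Fixpoint lca_size {V : eqType} (t : btree V) (i j : V) : nat :=
  match t with
  | Leaf _ => 1
  | Node l r =>
      if (i \in leaves l) && (j \in leaves l) then lca_size l i j
      else if (i \in leaves r) && (j \in leaves r) then lca_size r i j
      else size (leaves l ++ leaves r)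
  end.

(* cost_T(V) = sum over unordered pairs {i,j} of distinct elements of
   w i j * |leaves(T[i \/ j])|; each unordered pair is counted once via
   enum_rank i < enum_rank j. *)
Definition cost {R : pzRingType} {V : finType} (w : V -> V -> R) (t : btree V) : R :=
  \sum_(i : V) \sum_(j : V | (enum_rank i < enum_rank j)%N)
     (w i j * (lca_size t i j)%:R)%R.

From mathcomp Require Import all_boot all_order all_algebra.
From mathcomp Require Import ring.
Set Implicit Arguments. Unset Strict Implicit. Unset Printing Implicit Defensive.
Import Order.TTheory GRing.Theory Num.Theory.
Local Open Scope ring_scope.

(* Work with ordered pairs: for a tree t put lca_weight t = sum over ordered
   pairs i <> j of leaves of w i j * |leaves(t[i v j])|; by symmetry of w this
   is 2 * cost w t.  Let n be the number of leaves and W = within (leaves t)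
   the total weight of ordered pairs.
   - Upper bound: |leaves(t[i v j])| <= n, so lca_weight t <= n * W.
   - Lower bound: n * W <= 2 * lca_weight t, by induction on t.  At a node
     with children of leaf sets A, B (sizes a, b) every pair split by the node
     has lca weight a + b, and the triangle inequality w i i' <= w i j + w j i'
     averaged over j in B gives b * within A <= a * (across A B + across B A),
     and symmetrically; these two inequalities close the induction.
   Since W only depends on the leaf set V, chaining the two bounds for trees
   T and T' yields 2 * cost w T <= 2 * (2 * cost w T'). *)

Lemma sum_const_seq (R : pzSemiRingType) (I : Type) (s : seq I) (x : R) :
  \sum_(i <- s) x = (size s)%:R * x.
Proof. by rewrite big_const_seq count_predT iter_addr_0 mulr_natl. Qed.

Lemma sum_filter_le (R : numDomainType) (I : eqType) (s : seq I) (P : pred I)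
    (F : I -> R) :
  {in s, forall i, 0 <= F i} -> \sum_(i <- s | P i) F i <= \sum_(i <- s) F i.
Proof.
move=> F_ge0; rewrite big_mkcond /= big_seq [X in _ <= X]big_seq.
apply: ler_sum => i i_s.
by case: (P i); rewrite ?F_ge0.
Qed.

Lemma sum_neq_notin (R : nmodType) (V : eqType) (i : V) (s : seq V)
    (F : V -> R) :
  i \notin s -> \sum_(j <- s | i != j) F j = \sum_(j <- s) F j.
Proof.
move=> i_notin; rewrite big_seq_cond [RHS]big_seq; apply: eq_bigl => j.
by case j_s: (j \in s); rewrite ?andbT //; apply: contraNneq i_notin => ->.
Qed.

Lemma lca_size_sym (V : eqType) (t : btree V) (i j : V) :
  lca_size t i j = lca_size t j i.
Proof.
elim: t => //= l IHl r IHr.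
by rewrite IHl IHr (andbC (j \in leaves l)) (andbC (j \in leaves r)).
Qed.

Lemma lca_size_le (V : eqType) (t : btree V) (i j : V) :
  (lca_size t i j <= size (leaves t))%N.
Proof.
elim: t => //= l IHl r IHr; rewrite size_cat.
case: ifP => _; first exact: leq_trans IHl (leq_addr _ _).
by case: ifP => _ //; exact: leq_trans IHr (leq_addl _ _).
Qed.

Section OrderedPairSums.
Variables (R : numDomainType) (V : eqType) (w : V -> V -> R).

Definition within (A : seq V) : R := \sum_(i <- A) \sum_(j <- A | i != j) w i j.

Definition across (A B : seq V) : R := \sum_(i <- A) \sum_(j <- B) w i j.

Definition lca_weight (t : btree V) : R :=
  \sum_(i <- leaves t) \sum_(j <- leaves t | i != j) w i j * (lca_size t i j)%:R.

Lemma within_perm (A B : seq V) : perm_eq A B -> within A = within B.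
Proof.
by move=> pAB; rewrite /within (perm_big _ pAB); apply: eq_bigr => i _;
  apply: perm_big.
Qed.

Lemma within_cat (A B : seq V) : {in A, forall x, x \notin B} ->
  within (A ++ B) = within A + within B + across A B + across B A.
Proof.
move=> dAB; have dBA : {in B, forall x, x \notin A}.
  by move=> x xB; apply/negP => /dAB; rewrite xB.
have split_row (C D : seq V) (i : V) : i \notin D ->
    \sum_(j <- C ++ D | i != j) w i j =
    \sum_(j <- C | i != j) w i j + \sum_(j <- D) w i j.
  by move=> iD; rewrite big_cat /= [X in _ + X]sum_neq_notin.
rewrite /within /across big_cat /=.
have rowsA : \sum_(i <- A) \sum_(j <- A ++ B | i != j) w i j =
    \sum_(i <- A) \sum_(j <- A | i != j) w i j + \sum_(i <- A) \sum_(j <- B) w i j.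
  by rewrite -big_split; apply: eq_big_seq => i iA; rewrite split_row ?dAB.
have rowsB : \sum_(i <- B) \sum_(j <- A ++ B | i != j) w i j =
    \sum_(i <- B) \sum_(j <- B | i != j) w i j + \sum_(i <- B) \sum_(j <- A) w i j.
  rewrite -big_split; apply: eq_big_seq => i iB.
  by rewrite (perm_big _ (permEl (perm_catC A B))) split_row ?dBA.
by rewrite rowsA rowsB; ring.
Qed.

(* One row of the weighted sum at a node: the pairs (i, j) with j on the
   other side of the root all have lca weight n. *)
Lemma lca_row (C D : seq V) (i : V) (f g : V -> R) (n : R) : i \notin D ->
    {in C, f =1 g} -> {in D, forall j, f j = n} ->
  \sum_(j <- C ++ D | i != j) w i j * f j =
  \sum_(j <- C | i != j) w i j * g j + n * \sum_(j <- D) w i j.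
Proof.
move=> iD fgC fD; rewrite big_cat /= [X in _ + X]sum_neq_notin // mulr_sumr.
congr (_ + _).
  rewrite big_seq_cond [RHS]big_seq_cond.
  by apply: eq_bigr => j /andP[jC _]; rewrite fgC.
by apply: eq_big_seq => j jD; rewrite fD // mulrC.
Qed.

Lemma lca_weight_node (l r : btree V) :
  {in leaves l, forall x, x \notin leaves r} ->
  lca_weight (Node l r) = lca_weight l + lca_weight r +
    (size (leaves l) + size (leaves r))%:R *
      (across (leaves l) (leaves r) + across (leaves r) (leaves l)).
Proof.
move=> dlr; have drl : {in leaves r, forall x, x \notin leaves l}.
  by move=> x xr; apply/negP => /dlr; rewrite xr.
set n := (size (leaves l) + size (leaves r))%:R.
have rowsL : \sum_(i <- leaves l) \sum_(j <- leaves l ++ leaves r | i != j)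
      w i j * (lca_size (Node l r) i j)%:R =
    lca_weight l + n * across (leaves l) (leaves r).
  rewrite /lca_weight /across mulr_sumr -big_split; apply: eq_big_seq => i il.
  apply: lca_row => [|j jl|j jr] /=; first exact: dlr.
    by rewrite il jl.
  by rewrite il (negbTE (drl _ jr)) (negbTE (dlr _ il)) size_cat.
have rowsR : \sum_(i <- leaves r) \sum_(j <- leaves l ++ leaves r | i != j)
      w i j * (lca_size (Node l r) i j)%:R =
    lca_weight r + n * across (leaves r) (leaves l).
  rewrite /lca_weight /across mulr_sumr -big_split; apply: eq_big_seq => i ir.
  rewrite (perm_big _ (permEl (perm_catC _ _))).
  apply: lca_row => [|j jr|j jl] /=; first exact: drl.
    by rewrite (negbTE (drl _ ir)) ir jr.
  by rewrite (negbTE (drl _ ir)) ir (negbTE (dlr _ jl)) size_cat.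
rewrite [LHS]/lca_weight [leaves (Node l r)]/= big_cat /= rowsL rowsR.
by rewrite mulrDr; ring.
Qed.

Hypothesis w_ge0 : forall i j : V, i != j -> 0 <= w i j.
Hypothesis w_tri : forall i j k : V, i != j -> j != k -> i != k ->
  w i j <= w i k + w k j.

Lemma lca_weight_upper (t : btree V) :
  lca_weight t <= (size (leaves t))%:R * within (leaves t).
Proof.
rewrite /lca_weight /within mulr_sumr; apply: ler_sum => i _.
rewrite mulr_sumr; apply: ler_sum => j ij.
by rewrite mulrC ler_wpM2r ?w_ge0 // ler_nat lca_size_le.
Qed.

(* Averaging the triangle inequality w i i' <= w i j + w j i' over j in B. *)
Lemma within_le_across (A B : seq V) : {in A, forall x, x \notin B} ->
  (size B)%:R * within A <= (size A)%:R * (across A B + across B A).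
Proof.
move=> dAB; have neqAB x y : x \in A -> y \in B -> x != y.
  by move=> xA yB; apply: contraTneq yB => <-; exact: dAB.
have paths_bound : (size B)%:R * within A <=
    \sum_(i <- A) \sum_(i' <- A) \sum_(j <- B) (w i j + w j i').
  rewrite /within mulr_sumr big_seq [X in _ <= X]big_seq; apply: ler_sum => i iA.
  rewrite mulr_sumr.
  apply: (@le_trans _ _ (\sum_(i' <- A | i != i') \sum_(j <- B) (w i j + w j i'))).
    rewrite big_seq_cond [X in _ <= X]big_seq_cond.
    apply: ler_sum => i' /andP[i'A ii'].
    rewrite -sum_const_seq big_seq [X in _ <= X]big_seq; apply: ler_sum => j jB.
    by apply: w_tri => //; apply: neqAB.
  apply: sum_filter_le => i' i'A; rewrite big_seq; apply: sumr_ge0 => j jB.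
  by apply: addr_ge0; apply: w_ge0; [|rewrite eq_sym]; apply: neqAB.
have paths_total : \sum_(i <- A) \sum_(i' <- A) \sum_(j <- B) (w i j + w j i') =
    (size A)%:R * (across A B + across B A).
  under eq_bigr do under eq_bigr do rewrite big_split /=.
  rewrite /across mulrDr; under eq_bigr do rewrite big_split /=.
  rewrite big_split /=; congr (_ + _).
    by rewrite mulr_sumr; apply: eq_bigr => i _; rewrite sum_const_seq.
  by rewrite sum_const_seq exchange_big.
by rewrite -paths_total.
Qed.

(* Lower bound, by induction on the tree: the children satisfy it, and the
   pairs split at the root pay for the pairs inside each child thanks to
   within_le_across. *)
Lemma lca_weight_lower (t : btree V) : uniq (leaves t) ->
  (size (leaves t))%:R * within (leaves t) <= 2 * lca_weight t.
Proof.
elim: t => [v _ | l IHl r IHr].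
  by rewrite /within /lca_weight /= !big_cons !big_nil eqxx /= !addr0 !mulr0.
rewrite [leaves _]/= cat_uniq => /and3P[ul hlr ur].
have dlr : {in leaves l, forall x, x \notin leaves r}.
  by move=> x xl; apply/negP => xr; move/hasPn: hlr => /(_ x xr); rewrite /= xl.
have drl : {in leaves r, forall x, x \notin leaves l}.
  by move=> x xr; apply/negP => /dlr; rewrite xr.
rewrite lca_weight_node // [leaves _]/= within_cat // size_cat natrD.
have := within_le_across drl; have := within_le_across dlr.
move: (IHl ul) (IHr ur).
set a := (size (leaves l))%:R; set b := (size (leaves r))%:R.
set Wl := within (leaves l); set Wr := within (leaves r).
set Clr := across (leaves l) (leaves r); set Crl := across (leaves r) (leaves l).
move=> inner_l inner_r split_l split_r.
have -> : (a + b) * (Wl + Wr + Clr + Crl) =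
    (a * Wl + b * Wr) + (b * Wl + a * Wr) + (a + b) * (Clr + Crl) by ring.
have -> : 2 * (lca_weight l + lca_weight r + (a + b) * (Clr + Crl)) =
    (2 * lca_weight l + 2 * lca_weight r) + (a * (Clr + Crl) + b * (Crl + Clr))
    + (a + b) * (Clr + Crl) by ring.
by rewrite lerD2r; apply: lerD; apply: lerD.
Qed.

End OrderedPairSums.

Lemma sum_ordered_pairs (R : pzSemiRingType) (V : finType) (g : V -> V -> R) :
  (forall i j : V, i != j -> g i j = g j i) ->
  \sum_(i : V) \sum_(j : V | i != j) g i j =
  2 * \sum_(i : V) \sum_(j : V | (enum_rank i < enum_rank j)%N) g i j.
Proof.
move=> g_sym; pose lt (i j : V) := (enum_rank i < enum_rank j)%N.
have neq_lt (i j : V) : i != j = lt i j || lt j i.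
  rewrite /lt; case: ltngtP => [h|h|/val_inj/enum_rank_inj ->]; rewrite ?eqxx //.
    by apply: contraTneq h => ->; rewrite ltnn.
  by apply: contraTneq h => ->; rewrite ltnn.
have split_row (i : V) : \sum_(j | i != j) g i j =
    \sum_(j | lt i j) g i j + \sum_(j | lt j i) g i j.
  rewrite (bigID (lt i)) /=; congr (_ + _); apply: eq_bigl => j; rewrite neq_lt.
    by case: (lt i j); rewrite ?andbF.
  by rewrite /lt; case: ltngtP.
have swap : \sum_i \sum_(j | lt j i) g i j = \sum_i \sum_(j | lt i j) g i j.
  rewrite (exchange_big_dep predT) //=; apply: eq_bigr => i _.
  by apply: eq_bigr => j ij; apply: g_sym; rewrite neq_lt ij orbT.
by rewrite (eq_bigr _ (fun i _ => split_row i)) big_split /= swap mulr_natl mulr2n.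
Qed.

Section LeafBijections.
Variable V : finType.

Lemma leaf_bij_index (t : btree V) :
  leaf_bij t -> perm_eq (leaves t) (index_enum V).
Proof.
case/andP => ut /allP cover; apply: uniq_perm => //; first exact: index_enum_uniq.
by move=> x; rewrite mem_index_enum cover ?mem_enum.
Qed.

Lemma leaf_bij_perm (t t' : btree V) :
  leaf_bij t -> leaf_bij t' -> perm_eq (leaves t) (leaves t').
Proof.
move=> ht ht'; rewrite (permPl (leaf_bij_index ht)) perm_sym.
exact: leaf_bij_index.
Qed.

Lemma lca_weight_cost (R : numDomainType) (w : V -> V -> R) (t : btree V) :
  (forall i j : V, i != j -> w i j = w j i) -> leaf_bij t ->
  lca_weight w t = 2 * cost w t.
Proof.
move=> w_sym ht; rewrite /lca_weight (perm_big _ (leaf_bij_index ht)).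
under eq_bigr do rewrite (perm_big _ (leaf_bij_index ht)).
by apply: sum_ordered_pairs => i j ij; rewrite w_sym // lca_size_sym.
Qed.

End LeafBijections.

(* 2 * cost w T = lca_weight T <= n * W <= 2 * lca_weight T' = 4 * cost w T',
   where n and W are the same for T and T' since both have leaf set V. *)
Theorem mainTheorem14 (R : realFieldType) (V : finType) (w : V -> V -> R)
  (w_ge0 : forall i j : V, i != j -> 0 <= w i j)
  (w_sym : forall i j : V, i != j -> w i j = w j i)
  (w_tri : forall i j k : V, i != j -> j != k -> i != k ->
             w i j <= w i k + w k j)
  (T : btree V) (hT : leaf_bij T) :
  forall T' : btree V, leaf_bij T' -> cost w T <= 2 * cost w T'.
Proof.
move=> T' hT'; have pTT' := leaf_bij_perm hT hT'.
have upper := lca_weight_upper w_ge0 T.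
have lower := lca_weight_lower w_ge0 w_tri (proj1 (andP hT')).
rewrite (perm_size pTT') (within_perm w pTT') in upper.
have := le_trans upper lower.
by rewrite !lca_weight_cost // ler_pM2l.
Qed.
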